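(* Let $\varphi(x_1,\dots,x_n)=\bigwedge_{i=1}^m \mathit{cl}_i$ be a 3-CNF formula (each clause has exactly three distinct literals). Let $\mathcal{A}_\varphi$ be the one-player (all places owned by player 1) weighted recursive game graph with modules $A_0$, one module $A_y$ for each literal $y\in\{x_1,\neg x_1,\dots,x_n,\neg x_n\}$, and one module $A_{\mathit{cl}_i}$ per clause, each with a single entry and a single exit, defined as follows: $A_0$ (the initial module) invokes, in an infinite loop, boxes calling $A_{\mathit{cl}_1},A_{\mathit{cl}_2},\dots,A_{\mathit{cl}_m}$ in sequence, all transitions of weight $0$; in $A_{\mathit{cl}_i}$, for each literal $y$ of $\mathit{cl}_i$ there is a weight-$0$ transition from the entry to a box invoking $A_y$ and a weight-$0$ transition from that box's return to the exit; in $A_y$, the entry has exactly two outgoing transitions: a ''false'' transition directly to the exit with weight $-1$, and a ''true'' transition of weight $-1$ to a box invoking $A_{\neg y}$ (with $\neg\neg x=x$), whose return leads to the exit with weight $+2$. Then player 1 has a modular winning strategy in $\mathcal{A}_\varphi$ for the objective $\mathrm{LimInfAvg}\geq 0$ if and only if $\varphi$ is satisfiable.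
   Context: A weighted recursive game graph consists of modules, each with nodes, entry and exit nodes, boxes each invoking some module, and weighted transitions among nodes, calls (box, entry of invoked module) and returns (box, exit of invoked module); plays evolve over configurations consisting of a call stack of boxes and a current node, a call pushing the box and entering the invoked module, reaching an exit popping the box and continuing from the corresponding return. A modular strategy for player 1 assigns to each module a local strategy whose choice depends only on the sequence of nodes visited in the current invocation of that module (not on the calling context). A strategy is winning for $\mathrm{LimInfAvg}\geq 0$ if every consistent play $\pi$ has $\liminf_m w(\pi[1,m])/m\geq 0$, where $w$ is the sum of transition weights. *)

From mathcomp Require Import all_boot all_order all_algebra.
Set Implicit Arguments. Unset Strict Implicit. Unset Printing Implicit Defensive.
Import Order.TTheory GRing.Theory Num.Theory.

(* Places from which a transition can leave: a node, or a return (b, x)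
   (b a box, x an exit of the module invoked by b). *)
Inductive src (Node Box : Type) := SNode of Node | SRet of Box & Node.
(* Places a transition can reach: a node, or a call (b, e)
   (b a box, e an entry of the module invoked by b). *)
Inductive tgt (Node Box : Type) := TNode of Node | TCall of Box & Node.
Arguments SNode {Node Box}. Arguments SRet {Node Box}.
Arguments TNode {Node Box}. Arguments TCall {Node Box}.

Record wrgg := WRGG {
  Mod : Type;
  Node : Type;
  Box : Type;
  nmod : Node -> Mod;
  bmod : Box -> Mod;
  bcall : Box -> Mod;
  is_exit : Node -> bool;
  edge : src Node Box -> tgt Node Box -> int -> Prop;
  owner1 : src Node Box -> bool;
  init_node : Node
}.

Section Semantics.
Variable G : wrgg.
Notation Src := (src (Node G) (Box G)).
Notation Tgt := (tgt (Node G) (Box G)).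

(* A modular strategy of player 1: for each module a local strategy mapping
   the sequence of places visited in the current invocation (ending with the
   current place) to a choice of transition (target, weight). *)
Definition mstrategy := Mod G -> seq Src -> Tgt * int.

Definition legal (sigma : mstrategy) : Prop :=
  forall (M : Mod G) (h : seq Src) (s : Src),
    owner1 s -> (exists t w, edge s t w) ->
    edge s (sigma M (rcons h s)).1 (sigma M (rcons h s)).2.

(* Each stack
   frame additionally records the local history of the calling invocation
   (needed to evaluate modular strategies), and [hist] is the local history
   of the current invocation (places visited before the current node). *)
Record xconf := XConf {
  stk : seq (Box G * seq Src);
  hist : seq Src;
  cur : Node G }.

Definition init_conf : xconf := XConf [::] [::] (init_node G).

Definition cur_place (c : xconf) : Mod G * seq Src * Src * seq (Box G * seq Src) :=
  match is_exit (cur c), stk c with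
  | true, (b, hb) :: rest => (bmod b, hb, SRet b (cur c), rest)
  | _, _ => (nmod (cur c), hist c, SNode (cur c), stk c)
  end.

Definition step (sigma : mstrategy) (c : xconf) (t : Tgt) (w : int) (c' : xconf) : Prop :=
  let: (M, h, s, st) := cur_place c in
  let h' := rcons h s in
  [/\ edge s t w,
      (owner1 s -> sigma M h' = (t, w)) &
      c' = match t with
           | TNode v => XConf st h' v
           | TCall b e => XConf ((b, h') :: st) [::] e
           end].

Definition consistent_play (sigma : mstrategy) (c : nat -> xconf) (tw : nat -> Tgt * int) : Prop :=
  c 0%N = init_conf /\ forall i, step sigma (c i) (tw i).1 (tw i).2 (c i.+1).

Definition prefix_weight (tw : nat -> Tgt * int) (m : nat) : int :=
  (\sum_(i < m) (tw i).2)%R.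

(* liminf_m w(pi[1,m])/m >= 0, written out: for every eps > 0 the averages
   are eventually >= -eps. *)
Definition liminfavg_nonneg (tw : nat -> Tgt * int) : Prop :=
  forall eps : rat, (0 < eps)%R ->
    exists N : nat, forall m : nat, (N <= m)%N -> (0 < m)%N ->
      (- eps <= (prefix_weight tw m)%:~R / m%:R)%R.

Definition winning_modular (sigma : mstrategy) : Prop :=
  legal sigma /\
  forall c tw, consistent_play sigma c tw -> liminfavg_nonneg tw.

Definition has_modular_winning_strategy : Prop :=
  exists sigma : mstrategy, winning_modular sigma.

End Semantics.

(* literal over variables x_0..x_{n-1}: (i, true) = x_i, (i, false) = ~x_i *)
Definition lit (n : nat) := ('I_n * bool)%type.
Definition lneg (n : nat) (y : lit n) : lit n := (y.1, ~~ y.2).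
Definition clause (n : nat) := 3.-tuple (lit n).
Definition cnf3 (n : nat) := seq (clause n).

Definition lit_true (n : nat) (a : 'I_n -> bool) (y : lit n) : bool := a y.1 == y.2.

Definition satisfiable (n : nat) (phi : cnf3 n) : Prop :=
  exists a : 'I_n -> bool,
    forall cl, cl \in phi -> exists j : 'I_3, lit_true a (tnth cl j).

Inductive amod (n m : nat) := M0 | MLit of lit n | MCl of 'I_m.
Inductive anode (n m : nat) := En of amod n m | Ex of amod n m.
(* B0 i : box of A_0 invoking A_{cl_i};  BC i j : box of A_{cl_i} invoking
   A_y for y the j-th literal of cl_i;  BL y : box of A_y invoking A_{~y}. *)
Inductive abox (n m : nat) := B0 of 'I_m | BC of 'I_m & 'I_3 | BL of lit n.
Arguments M0 {n m}. Arguments MLit {n m}. Arguments MCl {n m}.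
Arguments En {n m}. Arguments Ex {n m}.
Arguments B0 {n m}. Arguments BC {n m}. Arguments BL {n m}.

Section Aphi.
Variables (n : nat) (phi : cnf3 n).
Let m := size phi.

Definition clause_lit (i : 'I_m) (j : 'I_3) : lit n := tnth (tnth (in_tuple phi) i) j.

Definition a_nmod (v : anode n m) : amod n m := match v with En M => M | Ex M => M end.
Definition a_bmod (b : abox n m) : amod n m :=
  match b with B0 _ => M0 | BC i _ => MCl i | BL y => MLit y end.
Definition a_bcall (b : abox n m) : amod n m :=
  match b with B0 i => MCl i | BC i j => MLit (clause_lit i j) | BL y => MLit (lneg y) end.
Definition a_is_exit (v : anode n m) : bool := if v is Ex _ then true else false.

Inductive a_edge : src (anode n m) (abox n m) -> tgt (anode n m) (abox n m) -> int -> Prop :=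
| e0_start (i : 'I_m) : nat_of_ord i = 0%N ->
    a_edge (SNode (En M0)) (TCall (B0 i) (En (MCl i))) 0
| e0_next (i j : 'I_m) : nat_of_ord j = ((nat_of_ord i).+1 %% m)%N ->
    a_edge (SRet (B0 i) (Ex (MCl i))) (TCall (B0 j) (En (MCl j))) 0
| ecl_call (i : 'I_m) (j : 'I_3) :
    a_edge (SNode (En (MCl i))) (TCall (BC i j) (En (MLit (clause_lit i j)))) 0
| ecl_ret (i : 'I_m) (j : 'I_3) :
    a_edge (SRet (BC i j) (Ex (MLit (clause_lit i j)))) (TNode (Ex (MCl i))) 0
| elit_false (y : lit n) :
    a_edge (SNode (En (MLit y))) (TNode (Ex (MLit y))) (- 1)%R
| elit_true (y : lit n) :
    a_edge (SNode (En (MLit y))) (TCall (BL y) (En (MLit (lneg y)))) (- 1)%R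
| elit_ret (y : lit n) :
    a_edge (SRet (BL y) (Ex (MLit (lneg y)))) (TNode (Ex (MLit y))) 2.

Definition A_phi : wrgg :=
  @WRGG (amod n m) (anode n m) (abox n m) a_nmod a_bmod a_bcall a_is_exit
        a_edge (fun _ => true) (En M0).

End Aphi.

(* Since every place belongs to player 1, a legal modular strategy determines a
   unique play, the canonical play: every consistent play coincides with it, and
   it is itself consistent as long as each configuration it reaches has an
   outgoing transition.  In A_phi a legal strategy makes only two kinds of real
   choices, both in the first step of an invocation: which literal y each
   clause module calls, and whether each literal module A_y takes its "true"
   transition (calling A_{~y}).  Call a clause good when A_y goes "true" and
   A_{~y} goes "false".
   - A good clause is a round of six steps of total weight 0, never dipping
     below -2; a clause whose literal goes "false" is a round of weight -1;
     when A_y and A_{~y} both go "true" the play descends forever, losing one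
     unit per step.
   - Hence if some clause is not good, a potential 6m * weight + steps stays
     bounded along the canonical play, so the mean payoff tends below 0 and the
     strategy is not winning.  If all clauses are good, the literals that go
     "true" on positive variables form a satisfying assignment.
   - Conversely a satisfying assignment yields a strategy (choose a true
     literal, go "true" exactly on true literals) all of whose clauses are good,
     so prefix weights stay >= -2 and the mean payoff has liminf >= 0. *)

From mathcomp Require Import all_boot all_order all_algebra.
From mathcomp Require Import zify ring lra.
Set Implicit Arguments. Unset Strict Implicit. Unset Printing Implicit Defensive.
Import Order.TTheory GRing.Theory Num.Theory.

Section CanonicalPlay.
Variables (G : wrgg) (sigma : mstrategy G).
Hypothesis all_player1 : forall s : src (Node G) (Box G), owner1 s.

Definition canon_step (c : xconf G) : xconf G * (tgt (Node G) (Box G) * int) :=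
  let: (M, h, s, st) := cur_place c in
  let tw := sigma M (rcons h s) in
  (match tw.1 with
   | TNode v => XConf st (rcons h s) v
   | TCall b e => XConf ((b, rcons h s) :: st) [::] e
   end, tw).

Definition place (c : xconf G) : src (Node G) (Box G) := (cur_place c).1.2.

Definition enabled (c : xconf G) : Prop := exists t w, edge (place c) t w.

Definition canon_conf (k : nat) : xconf G :=
  iter k (fun c => (canon_step c).1) (init_conf G).

Definition canon_move (k : nat) : tgt (Node G) (Box G) * int :=
  (canon_step (canon_conf k)).2.

Lemma step_canon c t w c' :
  step sigma c t w c' -> (t, w) = (canon_step c).2 /\ c' = (canon_step c).1.
Proof.
rewrite /step /canon_step; case: (cur_place c) => [[[M h] s] st].
by case=> _ /(_ (all_player1 s)) -> ->.
Qed.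

Lemma canon_step_valid c : legal sigma -> enabled c ->
  step sigma c (canon_step c).2.1 (canon_step c).2.2 (canon_step c).1.
Proof.
move=> leg; rewrite /enabled /place /step /canon_step.
case: (cur_place c) => [[[M h] s] st] /= en.
split; first exact: leg (all_player1 s) en.
- by case: (sigma M (rcons h s)).
- by case: (sigma M (rcons h s)) => [[v|b e] w].
Qed.

Lemma consistent_play_canon c tw : consistent_play sigma c tw ->
  forall k, c k = canon_conf k /\ tw k = canon_move k.
Proof.
move=> [c0 cstep].
have conf k : c k = canon_conf k.
  by elim: k => [//|k IH]; have [_ ->] := step_canon (cstep k); rewrite IH.
move=> k; split=> //; have [E _] := step_canon (cstep k).
by rewrite /canon_move -conf -E -surjective_pairing.
Qed.

Lemma canon_play_consistent : legal sigma -> (forall k, enabled (canon_conf k)) ->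
  consistent_play sigma canon_conf canon_move.
Proof. by move=> leg en; split=> // k; apply: canon_step_valid. Qed.

Definition moves (c c' : xconf G) (w : int) : Prop :=
  [/\ enabled c, (canon_step c).1 = c' & (canon_step c).2.2 = w].

Lemma canon_weight0 : prefix_weight canon_move 0 = 0%R.
Proof. by rewrite /prefix_weight big_ord0. Qed.

Lemma canon_advance k c c' w : canon_conf k = c -> moves c c' w ->
  [/\ enabled (canon_conf k), canon_conf k.+1 = c' &
      prefix_weight canon_move k.+1 = (prefix_weight canon_move k + w)%R].
Proof.
move=> ck [en e1 e2]; rewrite /prefix_weight big_ord_recr /canon_move /= ck.
by split; rewrite -?e2.
Qed.

End CanonicalPlay.

Local Open Scope ring_scope.

Lemma liminfavg_of_lower_bound (G : wrgg) (tw : nat -> tgt (Node G) (Box G) * int) (C : nat) :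
  (forall k, - (C%:Z) <= prefix_weight tw k) -> liminfavg_nonneg tw.
Proof.
move=> lb eps eps0.
have C_eps_ge0 : 0 <= (C%:R : rat) / eps by rewrite divr_ge0 // ltW.
exists (Num.Def.archi_bound ((C%:R : rat) / eps)) => k Nk k0.
have C_lt_k : (C%:R : rat) / eps < k%:R.
  by apply: (lt_le_trans (archi_boundP C_eps_ge0)); rewrite ler_nat.
have k_pos : (0 : rat) < k%:R by rewrite ltr0n.
have C_le : (C%:R : rat) <= eps * k%:R by rewrite mulrC -ler_pdivrMr // ltW.
rewrite ler_pdivlMr //.
have := lb k; rewrite -(ler_int rat) rmorphN /= -pmulrn.
lra.
Qed.

(* If L * w(pi[1,k]) + k is bounded above, the averages eventually stay
   below -1/(2L), so the mean payoff is negative. *)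
Lemma not_liminfavg_of_potential (G : wrgg) (tw : nat -> tgt (Node G) (Box G) * int)
  (L C : nat) : (0 < L)%N ->
  (forall k, prefix_weight tw k * L%:Z <= C%:Z - k%:Z) -> ~ liminfavg_nonneg tw.
Proof.
move=> L_pos ub lim.
have eps_pos : (0 : rat) < (2 * L)%:R^-1 by rewrite invr_gt0 ltr0n; lia.
have [N hN] := lim _ eps_pos.
set k := (N + 2 * C + 1)%N.
have := hN k ltac:(lia) ltac:(lia).
have := ub k; set W := prefix_weight tw k => hu hl.
have k_pos : (0 : rat) < k%:R by rewrite ltr0n; lia.
have L_pos' : (0 : rat) < L%:R by rewrite ltr0n.
rewrite ler_pdivlMr // in hl.
have hu' : (W%:~R : rat) * L%:R <= C%:R - k%:R.
  by move: hu; rewrite -(ler_int rat) rmorphM rmorphB /= !pmulrn.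
have eps_inv : (2 * L)%:R^-1 * (2 * L%:R) = (1 : rat).
  by rewrite -[2 * _]natrM mulVf // pnatr_eq0; lia.
have k_large : (k%:R : rat) >= 2 * C%:R + 1.
  have -> : 2 * C%:R + 1 = (2 * C + 1)%:R :> rat by rewrite natrD natrM.
  by rewrite ler_nat; lia.
move: hl hu' eps_inv k_large k_pos L_pos'; set x := (2 * L)%:R^-1; nra.
Qed.
(* Arithmetic of one clause round of at most 6 steps, starting at clause i
   of m with potential P and ending at clause i+1 mod m with potential P':
   the bound 1 + 6 i, lowered by 6m once the designated clause i0 has been
   passed, is preserved provided passing i0 costs 6m. *)
Lemma entry_potential_step (m i i0 d : nat) (P P' : int) :
  (i < m)%N -> (i0 < m)%N -> (d <= 6)%N ->
  P' <= P + d%:Z - (if i == i0 then (6 * m)%:Z else 0) ->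
  P <= 1 + 6 * i%:Z - (if (i0 < i)%N then (6 * m)%:Z else 0) ->
  P' <= 1 + 6 * (i.+1 %% m)%:Z - (if (i0 < i.+1 %% m)%N then (6 * m)%:Z else 0).
Proof.
move=> im i0m d6; have [lt | ge] := ltnP i.+1 m.
  rewrite modn_small //; case: eqVneq => [<-|ne]; rewrite ?ltnn ?ltnSn; first lia.
  by have [] := ltnP i0 i; have [] := ltnP i0 i.+1; lia.
have -> : i.+1 = m by lia.
rewrite modnn ltn0; case: eqVneq => [<-|ne]; rewrite ?ltnn; first lia.
by have [] := ltnP i0 i; lia.
Qed.

Lemma prefix_extend (P : nat -> Prop) a d :
  (forall k, (k <= a)%N -> P k) -> (forall l, (l <= d)%N -> P (a + l)%N) ->
  forall k, (k <= a + d)%N -> P k.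
Proof.
move=> Pa Pd k kad; case: (leqP k a) => [/Pa // | ak].
have -> : k = (a + (k - a))%N by lia.
by apply: Pd; lia.
Qed.

Section Aphi.
Variables (n : nat) (phi : cnf3 n).
Local Notation m := (size phi).
Local Notation G := (A_phi phi).
Local Notation XC := (@XConf G).

Local Notation entry i h := (XC [:: (B0 i, h)] [::] (En (MCl i))).

Lemma lnegK (y : lit n) : lneg (lneg y) = y.
Proof. by case: y => k b; rewrite /lneg /= negbK. Qed.

Definition next_clause (i : 'I_m) : 'I_m :=
  Ordinal (ltn_pmod i.+1 (leq_ltn_trans (leq0n i) (ltn_ord i))).

Section LegalStrategy.
Variable sigma : mstrategy G.
Hypothesis sigma_legal : legal sigma.

Lemma legal_choice (M : amod n m) (h : seq (src (anode n m) (abox n m))) s t w :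
  a_edge s t w -> a_edge s (sigma M (rcons h s)).1 (sigma M (rcons h s)).2.
Proof. by move=> e; apply: sigma_legal => //; exists t, w. Qed.

(* The literal called by clause module i, and whether literal module z goes
   "true"; these are the only decisions of a modular strategy that matter. *)
Definition chosen (i : 'I_m) : 'I_3 :=
  if (sigma (MCl i) [:: SNode (En (MCl i))]).1 is TCall (BC _ j) _ then j else ord0.

Definition chosen_lit (i : 'I_m) : lit n := clause_lit i (chosen i).

Definition sets_true (z : lit n) : bool :=
  if (sigma (MLit z) [:: SNode (En (MLit z))]).1 is TCall _ _ then true else false.

(* The canonical steps from each kind of configuration met along the play;
   the moves out of returns and out of the entry of A_0 are forced. *)
Lemma move_main_entry (i0 : 'I_m) : nat_of_ord i0 = 0%N ->
  moves sigma (init_conf G) (XC [:: (B0 i0, [:: SNode (En M0)])] [::] (En (MCl i0))) 0.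
Proof.
move=> i00; have := legal_choice M0 [::] (e0_start i00).
rewrite /moves /canon_step /=; case: (sigma _ _) => t w E; inversion E; subst.
have -> : i = i0 by apply: val_inj; rewrite /= i00.
by split=> //; exists (TCall (B0 i0) (En (MCl i0))), 0; apply: e0_start.
Qed.

Lemma move_clause_entry i st :
  moves sigma (XC st [::] (En (MCl i)))
    (XC ((BC i (chosen i), [:: SNode (En (MCl i))]) :: st) [::] (En (MLit (chosen_lit i)))) 0.
Proof.
have := legal_choice (MCl i) [::] (ecl_call i ord0).
rewrite /moves /canon_step /chosen_lit /chosen /=.
case: (sigma _ _) => t w E; inversion E; subst.
by split=> //; exists (TCall (BC i ord0) (En (MLit (clause_lit i ord0)))), 0; apply: ecl_call.
Qed.

Lemma move_lit_true z st : sets_true z ->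
  moves sigma (XC st [::] (En (MLit z)))
    (XC ((BL z, [:: SNode (En (MLit z))]) :: st) [::] (En (MLit (lneg z)))) (-1).
Proof.
have := legal_choice (MLit z) [::] (elit_false phi z).
rewrite /moves /canon_step /sets_true /=.
case: (sigma _ _) => t w E; inversion E; subst => // _.
by split=> //; exists (TNode (Ex (MLit z))), (-1); apply: elit_false.
Qed.

Lemma move_lit_false z st : ~~ sets_true z ->
  moves sigma (XC st [::] (En (MLit z))) (XC st [:: SNode (En (MLit z))] (Ex (MLit z))) (-1).
Proof.
have := legal_choice (MLit z) [::] (elit_false phi z).
rewrite /moves /canon_step /sets_true /=.
case: (sigma _ _) => t w E; inversion E; subst => // _.
by split=> //; exists (TNode (Ex (MLit z))), (-1); apply: elit_false.
Qed.

Lemma move_lit_return z hz st h :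
  moves sigma (XC ((BL z, hz) :: st) h (Ex (MLit (lneg z))))
    (XC st (rcons hz (SRet (BL z) (Ex (MLit (lneg z))))) (Ex (MLit z))) 2.
Proof.
have := legal_choice (MLit z) hz (elit_ret phi z).
rewrite /moves /canon_step /=.
case: (sigma _ _) => t w E; inversion E; subst.
by split=> //; exists (TNode (Ex (MLit z))), 2; apply: elit_ret.
Qed.

Lemma move_clause_return i j h1 st h :
  moves sigma (XC ((BC i j, h1) :: st) h (Ex (MLit (clause_lit i j))))
    (XC st (rcons h1 (SRet (BC i j) (Ex (MLit (clause_lit i j))))) (Ex (MCl i))) 0.
Proof.
have := legal_choice (MCl i) h1 (ecl_ret i j).
rewrite /moves /canon_step /=.
case: (sigma _ _) => t w E; inversion E; subst.
by split=> //; exists (TNode (Ex (MCl i))), 0; apply: ecl_ret.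
Qed.

Lemma move_main_return i h0 st h :
  moves sigma (XC ((B0 i, h0) :: st) h (Ex (MCl i)))
    (XC ((B0 (next_clause i), rcons h0 (SRet (B0 i) (Ex (MCl i)))) :: st) [::]
        (En (MCl (next_clause i)))) 0.
Proof.
have := legal_choice M0 h0 (@e0_next n phi i (next_clause i) erefl).
rewrite /moves /canon_step /=.
case: (sigma _ _) => t w E; inversion E; subst.
have -> : j = next_clause i by apply: val_inj.
by split=> //; exists (TCall (B0 j) (En (MCl j))), 0; apply: e0_next.
Qed.


Local Notation pc k := (canon_conf sigma k).
Local Notation cw k := (prefix_weight (canon_move sigma) k).

Lemma enabled_entry i h : enabled (entry i h).
Proof. by case: (move_clause_entry i [:: (B0 i, h)]). Qed.

Lemma play_start (i0 : 'I_m) : nat_of_ord i0 = 0%N ->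
  pc 1 = entry i0 [:: SNode (En M0)] /\ cw 1 = 0.
Proof.
move=> i00; have [_ e w] := @canon_advance _ _ 0 _ _ _ erefl (move_main_entry i00).
by rewrite e w canon_weight0 addr0.
Qed.

Definition good_clause i := sets_true (chosen_lit i) && ~~ sets_true (lneg (chosen_lit i)).
Definition skipped_clause i := ~~ sets_true (chosen_lit i).
Definition looping_clause i := sets_true (chosen_lit i) && sets_true (lneg (chosen_lit i)).

Definition strategy_assignment (k : 'I_n) : bool := sets_true (k, true).

Lemma good_clause_satisfied i :
  good_clause i -> lit_true strategy_assignment (chosen_lit i).
Proof.
rewrite /good_clause /lit_true /strategy_assignment.
case: (chosen_lit i) => k [] /andP[yt nyt] /=; first by rewrite yt.
by move: nyt; rewrite /lneg /= => /negbTE ->.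
Qed.

Lemma round_good k i h0 : pc k = entry i h0 -> good_clause i ->
  [/\ exists h0', pc (k + 6) = entry (next_clause i) h0',
      cw (k + 6) = cw k &
      forall l, (l <= 6)%N -> enabled (pc (k + l)) /\ cw k - 2 <= cw (k + l) <= cw k].
Proof.
rewrite /good_clause => e0 /andP[ty /negbTE fny].
have [en0 e1 w1] := canon_advance e0 (move_clause_entry _ _).
have [en1 e2 w2] := canon_advance e1 (move_lit_true _ ty).
have [en2 e3 w3] := canon_advance e2 (move_lit_false _ (negbT fny)).
have [en3 e4 w4] := canon_advance e3 (move_lit_return _ _ _ _).
have [en4 e5 w5] := canon_advance e4 (move_clause_return _ _ _ _ _).
have [en5 e6 w6] := canon_advance e5 (move_main_return _ _ _ _).
rewrite !addnS addn0; split; first by eexists; exact: e6.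
  by rewrite w6 w5 w4 w3 w2 w1; ring.
case=> [|[|[|[|[|[|[|l]]]]]]] // _; rewrite ?addnS addn0;
  (split; [ | rewrite ?w6 ?w5 ?w4 ?w3 ?w2 ?w1; apply/andP; split; lra]) => //.
by rewrite e6; apply: enabled_entry.
Qed.

Lemma round_skipped k i h0 : pc k = entry i h0 -> skipped_clause i ->
  [/\ exists h0', pc (k + 4) = entry (next_clause i) h0',
      cw (k + 4) = cw k - 1 &
      forall l, (l <= 4)%N -> enabled (pc (k + l)) /\ cw (k + l) <= cw k].
Proof.
rewrite /skipped_clause => e0 fy.
have [en0 e1 w1] := canon_advance e0 (move_clause_entry _ _).
have [en1 e2 w2] := canon_advance e1 (move_lit_false _ fy).
have [en2 e3 w3] := canon_advance e2 (move_clause_return _ _ _ _ _).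
have [en3 e4 w4] := canon_advance e3 (move_main_return _ _ _ _).
rewrite !addnS addn0; split; first by eexists; exact: e4.
  by rewrite w4 w3 w2 w1; ring.
case=> [|[|[|[|[|l]]]]] // _; rewrite ?addnS addn0;
  (split; [ | rewrite ?w4 ?w3 ?w2 ?w1; lra]) => //.
by rewrite e4; apply: enabled_entry.
Qed.

Lemma round_progress k i h0 : pc k = entry i h0 -> ~~ looping_clause i ->
  exists d h0', [/\ (0 < d <= 6)%N, pc (k + d) = entry (next_clause i) h0',
    (skipped_clause i -> cw (k + d) = cw k - 1) &
    forall l, (l <= d)%N -> enabled (pc (k + l)) /\ cw (k + l) <= cw k].
Proof.
move=> e0; rewrite /looping_clause.
case: (boolP (skipped_clause i)) => [sk _ | ].
  have [[h0' e] w b] := round_skipped e0 sk.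
  by exists 4%N, h0'.
rewrite /skipped_clause negbK => ty /nandP[/negP // | fny].
have [[h0' e] w b] := round_good e0 (introT andP (conj ty fny)).
by exists 6%N, h0'; split=> // l /b [en /andP[_ le]].
Qed.

(* If A_z and A_{~z} both go "true", the play calls them alternately forever,
   losing one unit per step. *)
Lemma literal_ping_pong k st z : sets_true z -> sets_true (lneg z) ->
  pc k = XC st [::] (En (MLit z)) ->
  forall l, enabled (pc (k + l)) /\ cw (k + l) = cw k - l%:Z.
Proof.
move=> tz tnz e0.
have descend l : exists st' z', [/\ sets_true z', sets_true (lneg z'),
    pc (k + l) = XC st' [::] (En (MLit z')) & cw (k + l) = cw k - l%:Z].
  elim: l => [|l [st' [z' [tz' tnz' el wl]]]].
    by exists st, z; rewrite addn0 subr0.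
  have [_ el' wl'] := canon_advance el (move_lit_true _ tz').
  exists ((BL z', [:: SNode (En (MLit z'))]) :: st'), (lneg z').
  by rewrite lnegK addnS el' wl' wl; split=> //; lia.
move=> l; have [st' [z' [tz' _ el wl]]] := descend l.
by have [en _ _] := canon_advance el (move_lit_true _ tz').
Qed.

Lemma round_looping k i h0 : pc k = entry i h0 -> looping_clause i ->
  forall l, enabled (pc (k + l)) /\ cw (k + l.+1) = cw k - l%:Z.
Proof.
move=> e0 /andP[ty tny].
have [en0 e1 w1] := canon_advance e0 (move_clause_entry _ _).
have pp := literal_ping_pong ty tny e1.
case=> [|l]; first by rewrite addn0 addn1 w1; split=> //; lia.
have [en _] := pp l; have [_ w] := pp l.+1.
have -> : (k + l.+2 = k.+1 + l.+1)%N by lia.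
by rewrite addnS -addSn w w1; split=> //; lia.
Qed.

Definition potential_ok k : Prop :=
  enabled (pc k) /\ (6 * m)%:Z * cw k + k%:Z <= 7 + (6 * m)%:Z.

Definition entry_invariant (i0 : 'I_m) kr : Prop :=
  exists h (i : 'I_m), [/\ pc kr = entry i h,
    (6 * m)%:Z * cw kr + kr%:Z <= 1 + 6 * (nat_of_ord i)%:Z - (if (i0 < i)%N then (6 * m)%:Z else 0) &
    forall k, (k <= kr)%N -> potential_ok k].

Lemma entry_invariant_start (i0 : 'I_m) : entry_invariant i0 1.
Proof.
have m_pos : (0 < m)%N by apply: leq_ltn_trans (leq0n i0) (ltn_ord i0).
have [e w] := play_start (i0 := Ordinal m_pos) erefl.
exists [:: SNode (En M0)], (Ordinal m_pos); split=> //; first by rewrite w /=; lia.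
case=> [|[|k]] // _; split; rewrite ?canon_weight0 ?w; try lia.
  by case: (move_main_entry (i0 := Ordinal m_pos) erefl).
by rewrite e; apply: enabled_entry.
Qed.

Lemma entry_invariant_step (i0 : 'I_m) kr : ~~ good_clause i0 -> entry_invariant i0 kr ->
  (forall k, potential_ok k) \/ exists2 kr', (kr < kr')%N & entry_invariant i0 kr'.
Proof.
move=> bad0 [h [i [e pot pre]]].
case: (boolP (looping_clause i)) => [li | nli].
  left => k; case: (leqP k kr) => [/pre // | lt].
  have [l ->] : exists l, k = (kr + l.+1)%N by exists (k - kr).-1; lia.
  have [en _] := round_looping e li l.+1; have [_ w] := round_looping e li l.
  split=> //; rewrite w; have := ltn_ord i; move: pot; case: (i0 < i)%N; nia.
right; have [d [h' [/andP[d_pos d6] e' skip_w ext]]] := round_progress e nli.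
have cw_drop l : (l <= d)%N -> (6 * m)%:Z * cw (kr + l) <= (6 * m)%:Z * cw kr.
  by move=> /ext[_ le]; rewrite ler_wpM2l.
exists (kr + d)%N; first lia.
exists h', (next_clause i); split=> //.
  apply: entry_potential_step (ltn_ord i) (ltn_ord i0) d6 _ pot.
  case: eqVneq => [/val_inj ei | _]; last by have := cw_drop d (leqnn d); lia.
  have sk : skipped_clause i.
    move: nli bad0; rewrite ei /looping_clause /good_clause /skipped_clause.
    by case: sets_true; case: sets_true.
  by rewrite (skip_w sk) mulrBr mulr1; lia.
apply: prefix_extend pre _ => l ld; have [en _] := ext l ld; split=> //.
have := cw_drop l ld; have := ltn_ord i; move: pot; case: (i0 < i)%N; lia.
Qed.

Lemma bad_clause_potential_ok (i0 : 'I_m) : ~~ good_clause i0 -> forall k, potential_ok k.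
Proof.
move=> bad0 k.
have rounds r : (forall k, potential_ok k) \/ exists2 kr, (r <= kr)%N & entry_invariant i0 kr.
  elim: r => [|r [all | [kr rk inv]]]; [ | by left | ].
    by right; exists 1%N => //; apply: entry_invariant_start.
  case: (entry_invariant_step bad0 inv) => [all | [kr' lt inv']]; first by left.
  by right; exists kr' => //; apply: leq_ltn_trans lt.
by case: (rounds k) => [// | [kr rk [h [i [_ _ pre]]]]]; apply: pre.
Qed.

Lemma winning_strategy_good_clauses :
  (forall c tw, consistent_play sigma c tw -> liminfavg_nonneg tw) -> forall i, good_clause i.
Proof.
move=> win i0; apply/negPn/negP => /bad_clause_potential_ok ok.
have play := @canon_play_consistent G sigma (fun _ => isT) sigma_legal (fun k => (ok k).1).
apply: (@not_liminfavg_of_potential G _ (6 * m) (7 + 6 * m) _ _ (win _ _ play)).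
  by have := ltn_ord i0; lia.
by move=> k; have [_] := ok k; lia.
Qed.

End LegalStrategy.

Section Assignment.
Variable a : 'I_n -> bool.

Definition assignment_move (s : src (anode n m) (abox n m)) : tgt (anode n m) (abox n m) * int :=
  match s with
  | SNode (En M0) => if [pick i : 'I_m | nat_of_ord i == 0%N] is Some i
                     then (TCall (B0 i) (En (MCl i)), 0) else (TNode (En M0), 0)
  | SNode (En (MCl i)) =>
      let j := odflt ord0 [pick j : 'I_3 | lit_true a (clause_lit i j)] in
      (TCall (BC i j) (En (MLit (clause_lit i j))), 0)
  | SNode (En (MLit y)) => if lit_true a y then (TCall (BL y) (En (MLit (lneg y))), -1)
                           else (TNode (Ex (MLit y)), -1)
  | SNode (Ex _) => (TNode (En M0), 0)
  | SRet (B0 i) _ => (TCall (B0 (next_clause i)) (En (MCl (next_clause i))), 0)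
  | SRet (BC i _) _ => (TNode (Ex (MCl i)), 0)
  | SRet (BL y) _ => (TNode (Ex (MLit y)), 2)
  end.

Definition assignment_strategy : mstrategy G :=
  fun _ hs => assignment_move (last (SNode (En M0)) hs).

Lemma assignment_strategy_legal : legal assignment_strategy.
Proof.
move=> M h s _ [t [w e]]; rewrite /assignment_strategy last_rcons.
case: e => /=.
- move=> i i0; case: pickP => [i' /eqP i'0 | /(_ i)]; first exact: e0_start.
  by rewrite i0 eqxx.
- by move=> i j ij; apply: e0_next.
- by move=> i j; apply: ecl_call.
- by move=> i j; apply: ecl_ret.
- by move=> y; case: (lit_true a y); [apply: elit_true | apply: elit_false].
- by move=> y; case: (lit_true a y); [apply: elit_true | apply: elit_false].
- by move=> y; apply: elit_ret.
Qed.

Lemma lit_true_lneg y : lit_true a (lneg y) = ~~ lit_true a y.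
Proof. by rewrite /lit_true /lneg /=; case: (a _); case: (y.2). Qed.

Lemma assignment_good_clause :
  (forall cl, cl \in phi -> exists j : 'I_3, lit_true a (tnth cl j)) ->
  forall i, good_clause assignment_strategy i.
Proof.
move=> sat i.
have sets_trueE z : sets_true assignment_strategy z = lit_true a z.
  by rewrite /sets_true /assignment_strategy /=; case: (lit_true a z).
have chosen_true : lit_true a (chosen_lit assignment_strategy i).
  rewrite /chosen_lit /chosen /assignment_strategy /=.
  case: pickP => [j // | none].
  have [j hj] := sat _ (mem_tnth i (in_tuple phi)).
  by have := none j; rewrite /clause_lit hj.
by rewrite /good_clause !sets_trueE lit_true_lneg chosen_true.
Qed.

Local Notation cw k := (prefix_weight (canon_move assignment_strategy) k).

(* Backward direction: prefix weights stay >= -2, since the play is a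
   succession of good rounds. *)
Lemma assignment_strategy_winning :
  (forall cl, cl \in phi -> exists j : 'I_3, lit_true a (tnth cl j)) ->
  winning_modular assignment_strategy.
Proof.
move=> sat; have leg := assignment_strategy_legal.
have good := assignment_good_clause sat.
split=> // c tw play.
have m_pos : (0 < m)%N.
  case: play => c0 /(_ 0%N); rewrite c0 /step /=; case=> e _ _.
  by inversion e; apply: leq_ltn_trans (leq0n i) (ltn_ord i).
have rounds r : exists (i : 'I_m) h,
    canon_conf assignment_strategy (1 + 6 * r) = entry i h /\ cw (1 + 6 * r)%N = 0.
  elim: r => [|r [i [h [e w]]]].
    have [e w] := play_start leg (i0 := Ordinal m_pos) erefl.
    by exists (Ordinal m_pos), [:: SNode (En M0)]; rewrite muln0 addn0.
  have [[h' e'] w' _] := round_good leg e (good i).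
  have -> : (1 + 6 * r.+1 = 1 + 6 * r + 6)%N by lia.
  by exists (next_clause i), h'; rewrite e' w' w.
have lower k : -2 <= cw k.
  case: k => [|k]; first by rewrite canon_weight0.
  have [i [h [e w]]] := rounds (k %/ 6)%N.
  have [_ _ bnd] := round_good leg e (good i).
  have [_ /andP[lb _]] := bnd (k %% 6)%N (ltnW (ltn_pmod k (isT : 0 < 6)%N)).
  have -> : k.+1 = (1 + 6 * (k %/ 6) + k %% 6)%N by rewrite {1}(divn_eq k 6); lia.
  by move: lb; rewrite w.
apply: (@liminfavg_of_lower_bound _ _ 2) => k.
have <- : cw k = prefix_weight tw k.
  by apply: eq_bigr => i _; have [_ ->] := @consistent_play_canon G _ (fun _ => isT) _ _ play i.
exact: lower.
Qed.

End Assignment.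
End Aphi.

Unset Implicit Arguments.

Theorem lemma12 (n : nat) (phi : cnf3 n)
  (H3 : forall cl, cl \in phi -> uniq cl) :
  has_modular_winning_strategy (A_phi phi) <-> satisfiable phi.
Proof.
split=> [[sigma [legal win]] | [a sat]].
- exists (strategy_assignment sigma) => cl cl_in.
  have /tnthP [i ->] : cl \in in_tuple phi by [].
  exists (chosen sigma i).
  exact: good_clause_satisfied (winning_strategy_good_clauses legal win i).
- by exists (assignment_strategy a); apply: assignment_strategy_winning.
Qed.
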